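(* Let $\Xi$, $x_0=1-x_1-x_2$, $F_\beta$, $\beta_3$, $p_\beta$ be as in the context, let $\beta_1=2$, and for $\beta>\beta_3$ let $h_\beta=F_\beta(p_\beta,p_\beta)$ (which equals $F_\beta(1-2p_\beta,p_\beta)=F_\beta(p_\beta,1-2p_\beta)$). Then there exists $\beta_2\in(\beta_3,\beta_1)$ such that $h_\beta>0$ for $\beta\in(\beta_3,\beta_2)$, $h_{\beta_2}=0$, and $h_\beta<0$ for $\beta\in(\beta_2,\beta_1)$.
   Context: $\Xi=\{(x_1,x_2): x_1,x_2\ge0,\ x_1+x_2\le1\}$, $x_0=1-x_1-x_2$, and $F_\beta(\mathbf{x})=-\frac12|\sum_{k=0}^2x_k\mathbf{v}_k|^2+\frac1\beta\sum_{k=0}^2x_k\log(3x_k)$ with $\mathbf{v}_k=(\cos(2\pi k/3),\sin(2\pi k/3))$; note $F_\beta(1/3,1/3)=0$. Define $f_0(t)=\frac{2}{3(1-3t)}\log\frac{1-2t}{t}$ for $t\in(0,1/2)\setminus\{1/3\}$, $f_0(1/3)=2$; $m_0$ is the minimizer of $f_0$ and $\beta_3=f_0(m_0)$. For $\beta>\beta_3$, $p_\beta$ is the smaller of the two solutions of $f_0(t)=\beta$ in $(0,1/2)$ (so $p_\beta<m_0$). *)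

From Stdlib Require Import Reals ClassicalEpsilon.
Open Scope R_scope.

Definition vx (k : nat) : R := cos (2 * PI * INR k / 3).
Definition vy (k : nat) : R := sin (2 * PI * INR k / 3).

Definition Fb (beta x1 x2 : R) : R :=
  let x0 := 1 - x1 - x2 in
  let sx := x0 * vx 0 + x1 * vx 1 + x2 * vx 2 in
  let sy := x0 * vy 0 + x1 * vy 1 + x2 * vy 2 in
  - / 2 * (sx ^ 2 + sy ^ 2)
  + / beta * (x0 * ln (3 * x0) + x1 * ln (3 * x1) + x2 * ln (3 * x2)).

Definition f0 (t : R) : R :=
  if Req_EM_T t (1/3) then 2
  else 2 / (3 * (1 - 3 * t)) * ln ((1 - 2 * t) / t).

Definition is_min_f0 (m : R) : Prop :=
  0 < m < 1/2 /\ forall t, 0 < t < 1/2 -> f0 m <= f0 t.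
Definition m0 : R := epsilon (inhabits 0) is_min_f0.
Definition beta3 : R := f0 m0.
Definition beta1 : R := 2.

Definition is_pbeta (beta p : R) : Prop :=
  0 < p < 1/2 /\ f0 p = beta /\
  forall q, 0 < q < 1/2 -> f0 q = beta -> p <= q.
Definition pbeta (beta : R) : R := epsilon (inhabits 0) (is_pbeta beta).

Definition hb (beta : R) : R := Fb beta (pbeta beta) (pbeta beta).

(* Away from 1/3, f_0' = (2/3) M / (1 - 3t)^2 with M' = (3t-1)(4t-1)/(t(1-2t))^2.
   Since M(1/6) < 0 < M(1/4) and M(1/3) = 0, M has a single zero m in (0, 1/3),
   lying in (1/6, 1/4): f_0 decreases on (0, m], increases on [m, 1/3), and
   f_0 >= 2 on [1/3, 1/2).  Hence m_0 = m, beta_3 = f_0(m), and beta |-> p_beta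
   inverts f_0 on (0, m).  At beta = f_0(p) we get beta F_beta(p, p) = k p with
   k' = -M/3, so k increases on (0, m] and vanishes at 1/6: the sign of h_beta
   changes at beta_2 = f_0(1/6). *)

From Stdlib Require Import Reals Lra ClassicalEpsilon.
From Coquelicot Require Import Coquelicot.
Open Scope R_scope.

Lemma derive_pos_increasing (f df : R -> R) (a b : R) : a < b ->
  (forall c, a <= c <= b -> is_derive f c (df c)) ->
  (forall c, a < c < b -> 0 < df c) -> f a < f b.
Proof.
  intros Hab Hd Hpos.
  destruct (MVT_cor2 f df a b Hab) as [c [Hfc Hc]].
  - intros c Hc. apply is_derive_Reals, Hd, Hc.
  - specialize (Hpos c Hc). nra.
Qed.

Lemma derive_neg_decreasing (f df : R -> R) (a b : R) : a < b ->
  (forall c, a <= c <= b -> is_derive f c (df c)) ->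
  (forall c, a < c < b -> df c < 0) -> f b < f a.
Proof.
  intros Hab Hd Hneg.
  enough (H : - f a < - f b) by lra.
  apply (derive_pos_increasing (fun x => - f x) (fun x => - df x)); [exact Hab | |].
  - intros c Hc. apply (is_derive_opp f), Hd, Hc.
  - intros c Hc. specialize (Hneg c Hc). lra.
Qed.

Lemma is_derive_continuity_pt (f : R -> R) (x l : R) :
  is_derive f x l -> continuity_pt f x.
Proof.
  intros Hd. apply is_derive_Reals in Hd.
  exact (derivable_continuous_pt f x (exist _ l Hd)).
Qed.

Lemma ln_1_plus_lt (x : R) : 0 < x -> ln (1 + x) < x.
Proof.
  intros Hx. rewrite <- (ln_exp x) at 2.
  apply ln_increasing; [lra | apply exp_ineq1; lra].
Qed.

Lemma ln_4_lt : ln 4 < 3/2.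
Proof.
  assert (Hpow : 4 < (1 + 3/32) ^ 16) by (simpl; lra).
  apply Rlt_trans with (ln ((1 + 3/32) ^ 16)).
  - apply ln_increasing; lra.
  - rewrite ln_pow by lra. pose proof (ln_1_plus_lt (3/32)). simpl INR. lra.
Qed.

Lemma vertices :
  vx 0 = 1 /\ vx 1 = -1/2 /\ vx 2 = -1/2 /\ vy 0 = 0 /\ vy 2 = - vy 1.
Proof.
  unfold vx, vy. simpl INR.
  replace (2 * PI * 0 / 3) with 0 by field.
  replace (2 * PI * 1 / 3) with (- (PI/3) + PI) by field.
  replace (2 * PI * (1 + 1) / 3) with (PI/3 + PI) by field.
  rewrite !neg_cos, !neg_sin, cos_neg, sin_neg, cos_0, sin_0, cos_PI3.
  repeat split; lra.
Qed.

Lemma Fb_diag (beta p : R) : Fb beta p p =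
  - / 2 * (1 - 3 * p) ^ 2
  + / beta * ((1 - 2 * p) * ln (3 * (1 - 2 * p)) + 2 * p * ln (3 * p)).
Proof.
  destruct vertices as [H0 [H1 [H2 [H3 H4]]]].
  unfold Fb. rewrite H0, H1, H2, H3, H4.
  replace (1 - p - p) with (1 - 2 * p) by ring.
  replace ((1 - 2 * p) * 1 + p * (-1 / 2) + p * (-1 / 2)) with (1 - 3 * p) by field.
  ring.
Qed.

Lemma pbeta_eq (beta p : R) : is_pbeta beta p -> pbeta beta = p.
Proof.
  intros Hp.
  assert (Hq : is_pbeta beta (pbeta beta)) by (unfold pbeta; apply epsilon_spec; now exists p).
  destruct Hp as [Hp [Hfp Hpmin]], Hq as [Hq [Hfq Hqmin]].
  apply Rle_antisym; [apply Hqmin | apply Hpmin]; assumption.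
Qed.

Lemma m0_eq (m : R) : 0 < m < 1/2 ->
  (forall t, 0 < t < 1/2 -> t <> m -> f0 m < f0 t) -> m0 = m.
Proof.
  intros Hm Hstrict.
  assert (Hmin : is_min_f0 m).
  { split; [exact Hm |]. intros t Ht.
    destruct (Req_EM_T t m) as [-> | Htm]; [lra | apply Rlt_le, Hstrict; assumption]. }
  assert (Hm0 : is_min_f0 m0) by (unfold m0; apply epsilon_spec; now exists m).
  destruct Hm0 as [Hm0 Hm0min].
  destruct (Req_EM_T m0 m) as [E | Hne]; [exact E |].
  specialize (Hstrict m0 Hm0 Hne). specialize (Hm0min m Hm). lra.
Qed.

Definition f (t : R) : R := 2 / (3 * (1 - 3 * t)) * ln ((1 - 2 * t) / t).
Definition M (t : R) : R := 3 * ln ((1 - 2 * t) / t) - (1 - 3 * t) / (t * (1 - 2 * t)).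
Definition k (p : R) : R := ln 3 + (2/3 - p) * ln (1 - 2 * p) + (1/3 + p) * ln p.

Lemma f0_f (t : R) : t <> 1/3 -> f0 t = f t.
Proof.
  intros Ht. unfold f0. destruct (Req_EM_T t (1/3)); [contradiction | reflexivity].
Qed.

Lemma ratio_pos (t : R) : 0 < t < 1/2 -> 0 < (1 - 2 * t) / t.
Proof. intros Ht. apply Rdiv_lt_0_compat; lra. Qed.

Lemma is_derive_f (t : R) : 0 < t < 1/2 -> t <> 1/3 ->
  is_derive f t (2/3 * M t / (1 - 3 * t) ^ 2).
Proof.
  intros Ht Ht3. pose proof (ratio_pos t Ht). unfold f, M. auto_derive.
  - repeat split; lra.
  - unfold Rminus, Rdiv in *. field. repeat split; lra.
Qed.

Lemma is_derive_M (t : R) : 0 < t < 1/2 ->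
  is_derive M t ((3 * t - 1) * (4 * t - 1) / (t ^ 2 * (1 - 2 * t) ^ 2)).
Proof.
  intros Ht. pose proof (ratio_pos t Ht). unfold M. auto_derive.
  - repeat split; try lra. apply Rmult_integral_contrapositive; lra.
  - unfold Rminus, Rdiv in *. field. repeat split; lra.
Qed.

Lemma is_derive_k (p : R) : 0 < p < 1/2 -> is_derive k p (- M p / 3).
Proof.
  intros Hp. unfold k, M. auto_derive.
  - repeat split; lra.
  - rewrite ln_div by lra. unfold Rminus. field. lra.
Qed.

Lemma M_increasing (a b : R) : 0 < a -> a < b -> b <= 1/4 -> M a < M b.
Proof.
  intros Ha Hab Hb.
  apply (derive_pos_increasing M
    (fun c => (3 * c - 1) * (4 * c - 1) / (c ^ 2 * (1 - 2 * c) ^ 2)) a b Hab); intros c Hc.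
  - apply is_derive_M; lra.
  - apply Rdiv_lt_0_compat; [nra |].
    apply Rmult_lt_0_compat; apply pow_lt; lra.
Qed.

Lemma M_decreasing (a b : R) : 1/4 <= a -> a < b -> b <= 1/3 -> M b < M a.
Proof.
  intros Ha Hab Hb.
  apply (derive_neg_decreasing M
    (fun c => (3 * c - 1) * (4 * c - 1) / (c ^ 2 * (1 - 2 * c) ^ 2)) a b Hab); intros c Hc.
  - apply is_derive_M; lra.
  - unfold Rdiv. apply Rmult_neg_pos; [nra |].
    apply Rinv_0_lt_compat, Rmult_lt_0_compat; apply pow_lt; lra.
Qed.

Lemma M_one_sixth : M (1/6) < 0.
Proof.
  unfold M. replace ((1 - 2 * (1/6)) / (1/6)) with 4 by field.
  pose proof ln_4_lt. lra.
Qed.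

Lemma M_one_third : M (1/3) = 0.
Proof.
  unfold M. replace ((1 - 2 * (1/3)) / (1/3)) with 1 by field.
  rewrite ln_1. field.
Qed.

Lemma M_root_exists : exists m, 1/6 < m < 1/4 /\ M m = 0.
Proof.
  assert (H14 : 0 < M (1/4)).
  { pose proof (M_decreasing (1/4) (1/3)). rewrite M_one_third in H. lra. }
  pose proof M_one_sixth as H16.
  destruct (Ranalysis5.IVT_interv M (1/6) (1/4)) as [m [[Hm1 Hm2] HMm]];
    [intros a Ha; apply (is_derive_continuity_pt _ _ _ (is_derive_M a ltac:(lra)))
    | lra | exact H16 | exact H14 |].
  exists m. split; [| exact HMm].
  destruct Hm1 as [Hm1 | <-]; [| lra]. destruct Hm2 as [Hm2 | ->]; [| lra]. lra.
Qed.

Lemma f_pos (t : R) : 0 < t < 1/3 -> 0 < f t.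
Proof.
  intros Ht. unfold f. apply Rmult_lt_0_compat; [apply Rdiv_lt_0_compat; lra |].
  rewrite <- ln_1. apply ln_increasing; [lra |].
  apply (Rmult_lt_reg_r t); [lra |]. field_simplify; lra.
Qed.

Lemma f_one_sixth : f (1/6) < 2.
Proof.
  unfold f. replace ((1 - 2 * (1/6)) / (1/6)) with 4 by field.
  pose proof ln_4_lt. lra.
Qed.

Lemma ln_lt_mobius (y : R) : 0 < y < 1 -> ln y < 2 * (y - 1) / (y + 1).
Proof.
  intros Hy.
  pose (g := fun x => ln x - 2 * (x - 1) / (x + 1)).
  assert (Hg1 : g 1 = 0) by (unfold g; rewrite ln_1; field).
  assert (Hg : g y < g 1); [| rewrite Hg1 in Hg; unfold g in Hg; lra].
  apply (derive_pos_increasing g (fun x => (x - 1) ^ 2 / (x * (x + 1) ^ 2)));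
    [lra | |]; intros c Hc.
  - unfold g. auto_derive; [lra |]. field. lra.
  - apply Rdiv_lt_0_compat; [nra |]. apply Rmult_lt_0_compat; nra.
Qed.

Lemma f_gt_2 (t : R) : 1/3 < t < 1/2 -> 2 < f t.
Proof.
  intros Ht. unfold f.
  assert (Hy : 0 < (1 - 2 * t) / t < 1).
  { split; [apply ratio_pos; lra |].
    apply (Rmult_lt_reg_r t); [lra |]. field_simplify; lra. }
  pose proof (ln_lt_mobius _ Hy) as Hln.
  replace (2 * ((1 - 2 * t) / t - 1) / ((1 - 2 * t) / t + 1))
    with (2 * (1 - 3 * t) / (1 - t)) in Hln by (field; lra).
  set (L := ln ((1 - 2 * t) / t)) in *.
  assert (HL : L * (1 - t) < 2 * (1 - 3 * t)).
  { apply (Rmult_lt_reg_r (/ (1 - t))); [apply Rinv_0_lt_compat; lra |].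
    replace (L * (1 - t) * / (1 - t)) with L by (field; lra). lra. }
  replace (2 / (3 * (1 - 3 * t)) * L) with (- 2 * L / (- 3 * (1 - 3 * t)))
    by (field; lra).
  apply (Rmult_lt_reg_r (- 3 * (1 - 3 * t))); [lra |].
  unfold Rdiv. rewrite Rmult_assoc, Rinv_l by lra. nra.
Qed.

Lemma k_one_sixth : k (1/6) = 0.
Proof.
  unfold k. replace (1 - 2 * (1/6)) with (2/3) by field.
  replace (2/3 - 1/6) with (1/2) by field. replace (1/3 + 1/6) with (1/2) by field.
  assert (H : ln (2/3) + ln (1/6) = - 2 * ln 3).
  { rewrite <- ln_mult by lra. replace (2/3 * (1/6)) with (/ (3 * 3)) by field.
    rewrite ln_Rinv, ln_mult by lra. ring. }
  lra.
Qed.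

Lemma f_mul_Fb_diag (p : R) : 0 < p < 1/3 -> f p * Fb (f p) p p = k p.
Proof.
  intros Hp. pose proof (f_pos p Hp) as Hf.
  rewrite Fb_diag.
  transitivity (- / 2 * (1 - 3 * p) ^ 2 * f p
    + ((1 - 2 * p) * ln (3 * (1 - 2 * p)) + 2 * p * ln (3 * p))); [field; lra |].
  unfold f, k. rewrite !ln_mult, ln_div by lra. field. lra.
Qed.

Section Root.

Variable m : R.
Hypothesis Hm : 1/6 < m < 1/4.
Hypothesis HMm : M m = 0.

Lemma M_neg_before_root (t : R) : 0 < t < m -> M t < 0.
Proof. intros Ht. pose proof (M_increasing t m). lra. Qed.

Lemma M_pos_after_root (t : R) : m < t < 1/3 -> 0 < M t.
Proof.
  intros Ht. destruct (Rle_lt_dec t (1/4)).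
  - pose proof (M_increasing m t). lra.
  - pose proof (M_decreasing t (1/3)). rewrite M_one_third in H. lra.
Qed.

Lemma f_decreasing (a b : R) : 0 < a -> a < b -> b <= m -> f b < f a.
Proof.
  intros Ha Hab Hb.
  apply (derive_neg_decreasing f (fun c => 2/3 * M c / (1 - 3 * c) ^ 2) a b Hab); intros c Hc.
  - apply is_derive_f; lra.
  - unfold Rdiv. apply Rmult_neg_pos.
    + pose proof (M_neg_before_root c). lra.
    + apply Rinv_0_lt_compat, pow_lt. lra.
Qed.

Lemma f_increasing (a b : R) : m <= a -> a < b -> b < 1/3 -> f a < f b.
Proof.
  intros Ha Hab Hb.
  apply (derive_pos_increasing f (fun c => 2/3 * M c / (1 - 3 * c) ^ 2) a b Hab); intros c Hc.
  - apply is_derive_f; lra.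
  - apply Rdiv_lt_0_compat; [| apply pow_lt; lra].
    pose proof (M_pos_after_root c). lra.
Qed.

Lemma f_lt_iff (p q : R) : 0 < p <= m -> 0 < q <= m -> f p < f q <-> q < p.
Proof.
  intros Hp Hq. split; intros H.
  - destruct (Rtotal_order q p) as [Hqp | [-> | Hpq]]; [exact Hqp | lra |].
    pose proof (f_decreasing p q). lra.
  - apply f_decreasing; lra.
Qed.

Lemma f0_strict_min (t : R) : 0 < t < 1/2 -> t <> m -> f m < f0 t.
Proof.
  intros Ht Htm. destruct (Req_EM_T t (1/3)) as [-> | Ht3].
  - unfold f0. destruct (Req_EM_T (1/3) (1/3)) as [_ | []]; [| reflexivity].
    pose proof (f_decreasing (1/6) m). pose proof f_one_sixth. lra.
  - rewrite f0_f by exact Ht3.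
    destruct (Rtotal_order t m) as [Hlt | [-> | Hgt]]; [apply f_decreasing; lra | easy |].
    destruct (Rtotal_order t (1/3)) as [Hlt3 | [Heq3 | Hgt3]];
      [apply f_increasing; lra | contradiction |].
    pose proof (f_decreasing (1/6) m). pose proof f_one_sixth. pose proof (f_gt_2 t). lra.
Qed.

Lemma beta3_root : beta3 = f m.
Proof.
  assert (Hm0 : m0 = m).
  { apply m0_eq; [lra |]. intros t Ht Htm.
    rewrite (f0_f m) by lra. apply f0_strict_min; assumption. }
  unfold beta3. rewrite Hm0. apply f0_f. lra.
Qed.

Lemma f_onto (beta : R) : f m < beta < 2 -> exists p, 0 < p < m /\ f p = beta.
Proof.
  intros Hbeta.
  set (t := / (2 + exp 3)).
  assert (He : 1 + 3 < exp 3) by (apply exp_ineq1; lra).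
  assert (Ht : 0 < t < 1/6).
  { unfold t. split; [apply Rinv_0_lt_compat; lra |].
    apply (Rmult_lt_reg_r (2 + exp 3)); [lra |]. rewrite Rinv_l; lra. }
  assert (Hft : 2 < f t).
  { unfold f. replace ((1 - 2 * t) / t) with (exp 3) by (unfold t; field; lra).
    rewrite ln_exp.
    replace (2 / (3 * (1 - 3 * t)) * 3) with (2 / (1 - 3 * t)) by (field; lra).
    apply (Rmult_lt_reg_r (1 - 3 * t)); [lra |].
    unfold Rdiv. rewrite Rmult_assoc, Rinv_l; lra. }
  destruct (Ranalysis5.IVT_interv (fun x => beta - f x) t m) as [p [Hp Hfp]];
    [| lra | lra | lra |].
  - intros x Hx. apply continuity_pt_minus; [apply continuity_pt_const; now intros ? ? |].
    apply (is_derive_continuity_pt _ _ _ (is_derive_f x ltac:(lra) ltac:(lra))).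
  - exists p. split; [| lra].
    destruct Hp as [[Hp1 | <-] [Hp2 | ->]]; lra.
Qed.

Lemma pbeta_f (p : R) : 0 < p < m -> pbeta (f p) = p.
Proof.
  intros Hp. apply pbeta_eq. split; [lra |]. split; [apply f0_f; lra |].
  intros q Hq Hfq. destruct (Rle_lt_dec p q) as [Hpq | Hqp]; [exact Hpq |].
  rewrite f0_f in Hfq by lra. pose proof (f_decreasing q p). lra.
Qed.

Lemma hb_f (p : R) : 0 < p < m -> hb (f p) = k p / f p.
Proof.
  intros Hp. pose proof (f_pos p ltac:(lra)).
  unfold hb. rewrite pbeta_f by exact Hp.
  rewrite <- f_mul_Fb_diag by lra. field. lra.
Qed.

Lemma k_lt_iff (p q : R) : 0 < p <= m -> 0 < q <= m -> k p < k q <-> p < q.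
Proof.
  assert (Hinc : forall a b, 0 < a -> a < b -> b <= m -> k a < k b).
  { intros a b Ha Hab Hb.
    apply (derive_pos_increasing k (fun c => - M c / 3) a b Hab); intros c Hc.
    - apply is_derive_k; lra.
    - pose proof (M_neg_before_root c). lra. }
  intros Hp Hq. split; intros H.
  - destruct (Rtotal_order p q) as [Hpq | [-> | Hqp]]; [exact Hpq | lra |].
    pose proof (Hinc q p). lra.
  - apply Hinc; lra.
Qed.

End Root.

Theorem lemma4p3 :
  exists beta2 : R, beta3 < beta2 < beta1 /\
    (forall beta, beta3 < beta < beta2 -> hb beta > 0) /\
    hb beta2 = 0 /\
    (forall beta, beta2 < beta < beta1 -> hb beta < 0).
Proof.
  destruct M_root_exists as [m [Hm HMm]].
  assert (Hfm : f m < f (1/6)) by (apply (f_decreasing m); lra).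
  pose proof f_one_sixth as Hf16.
  exists (f (1/6)). unfold beta1. rewrite (beta3_root m Hm HMm).
  split; [lra |]. split; [| split].
  - intros beta Hbeta. destruct (f_onto m Hm beta ltac:(lra)) as [p [Hp <-]].
    rewrite (hb_f m Hm HMm p Hp).
    apply Rdiv_lt_0_compat; [| apply f_pos; lra].
    rewrite <- k_one_sixth. apply (k_lt_iff m Hm HMm); [lra | lra |].
    apply (f_lt_iff m Hm HMm); lra.
  - rewrite (hb_f m Hm HMm) by lra. rewrite k_one_sixth. apply Rdiv_0_l.
  - intros beta Hbeta. destruct (f_onto m Hm beta ltac:(lra)) as [p [Hp <-]].
    rewrite (hb_f m Hm HMm p Hp).
    apply Rdiv_neg_pos; [| apply f_pos; lra].
    rewrite <- k_one_sixth. apply (k_lt_iff m Hm HMm); [lra | lra |].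
    apply (f_lt_iff m Hm HMm); lra.
Qed.
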